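(* Let $X$ be a finite discrete space with at least two elements, $\Gamma$ a nonempty countable set, $\varphi:\Gamma\to\Gamma$ any map, and $\sigma_\varphi:X^\Gamma\to X^\Gamma$ the generalized shift. Then each of the following statements is equivalent to ''$\varphi$ has at least one non-quasi-periodic point'': (a) $(X^\Gamma,\sigma_\varphi)$ is uniform distributional chaotic; (b) it is DC$^u$1; (c) it is DC$^\infty$1; (d) it is DC$^2$1; (e) it is DC$^u$2; (f) it is DC$^\infty$2; (g) it is DC$^2$2.
   Context: $X^\Gamma$ carries the product topology; it is compact metrizable, and $d$ denotes a fixed compatible metric. The generalized shift is $\sigma_\varphi((x_\alpha)_{\alpha\in\Gamma})=(x_{\varphi(\alpha)})_{\alpha\in\Gamma}$. A point $\theta\in\Gamma$ is quasi-periodic for $\varphi$ if $\{\varphi^n(\theta):n\ge0\}$ is finite (equivalently, the orbit meets the set of periodic points); otherwise it is non-quasi-periodic. For a continuous $f:Y\to Y$ on a compact metric space $(Y,d)$, $x,y\in Y$, $t\in\mathbb R$, $n\ge1$, let $\xi(x,y,t,n)=\#\{i\in\{0,\dots,n-1\}:d(f^i(x),f^i(y))<t\}$, $F_{xy}(t)=\liminf_{n\to\infty}\xi(x,y,t,n)/n$, $F^*_{xy}(t)=\limsup_{n\to\infty}\xi(x,y,t,n)/n$. A pair $x,y$ is distributional scrambled of type 1 if there is $s>0$ with $F_{xy}(s)=0$ and $F^*_{xy}(s)=1$ for all $s>0$; of type 2 if there is $s>0$ with $F_{xy}(s)<1$ and $F^*_{xy}(s)=1$ for all $s>0$. A set $A\subseteq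 Y$ with at least two elements is distributional scrambled of type $i$ if every pair of distinct points of $A$ is. $f$ is DC$^u i$ (resp. DC$^\infty i$, DC$^2 i$) if $Y$ has an uncountable (resp. infinite, resp. at least two-element) distributional scrambled set of type $i$. $(Y,f)$ is uniform distributional chaotic if there are an uncountable distributional scrambled set $A$ of type 1 and $\varepsilon>0$ with $F_{xy}(\varepsilon)=0$ for all distinct $x,y\in A$. *)

From Stdlib Require Import Reals List.
From Coquelicot Require Import Coquelicot.
Open Scope R_scope.

Definition finite_type (T : Type) : Prop := exists l : list T, forall x, In x l.
Definition countable_type (T : Type) : Prop :=
  exists f : T -> nat, forall a b, f a = f b -> a = b.

Definition set_finite {T : Type} (A : T -> Prop) : Prop :=
  exists l : list T, forall x, A x -> In x l.
Definition set_infinite {T : Type} (A : T -> Prop) : Prop := ~ set_finite A.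
Definition set_countable {T : Type} (A : T -> Prop) : Prop :=
  exists f : T -> nat, forall a b, A a -> A b -> f a = f b -> a = b.
Definition set_uncountable {T : Type} (A : T -> Prop) : Prop := ~ set_countable A.
Definition set_two_elements {T : Type} (A : T -> Prop) : Prop :=
  exists x y, A x /\ A y /\ x <> y.

Definition gen_shift {X G : Type} (phi : G -> G) (x : G -> X) : G -> X :=
  fun a => x (phi a).

Definition quasi_periodic {G : Type} (phi : G -> G) (theta : G) : Prop :=
  set_finite (fun g => exists n : nat, g = Nat.iter n phi theta).
Definition has_non_quasi_periodic {G : Type} (phi : G -> G) : Prop :=
  exists theta, ~ quasi_periodic phi theta.

Definition is_metric {Y : Type} (d : Y -> Y -> R) : Prop :=
  (forall x y, 0 <= d x y) /\
  (forall x y, d x y = 0 <-> x = y) /\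
  (forall x y, d x y = d y x) /\
  (forall x y z, d x z <= d x y + d y z).

(* The metric topology of d equals the product topology on G -> X
   (X discrete):
   - every d-ball around x contains a basic cylinder around x
     (finitely many coordinates fixed), and
   - every subbasic cylinder {y | y g = x g} contains a d-ball around x. *)
Definition compatible_product_metric {X G : Type} (d : (G -> X) -> (G -> X) -> R) : Prop :=
  (forall (x : G -> X) (eps : R), 0 < eps ->
     exists F : list G, forall y, (forall g, In g F -> y g = x g) -> d x y < eps) /\
  (forall (x : G -> X) (g : G),
     exists delta, 0 < delta /\ forall y, d x y < delta -> y g = x g).

Section DC.
Context {Y : Type} (d : Y -> Y -> R) (f : Y -> Y).

Fixpoint xi (x y : Y) (t : R) (n : nat) : R :=
  match n with
  | O => 0
  | S m => xi x y t m +
           (if Rlt_dec (d (Nat.iter m f x) (Nat.iter m f y)) t then 1 else 0)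
  end.

(* liminf / limsup over n >= 1 of xi(x,y,t,n)/n (sequence indexed by n+1) *)
Definition F_low (x y : Y) (t : R) : Rbar :=
  LimInf_seq (fun n => xi x y t (S n) / INR (S n)).
Definition F_up (x y : Y) (t : R) : Rbar :=
  LimSup_seq (fun n => xi x y t (S n) / INR (S n)).

Definition DC_pair1 (x y : Y) : Prop :=
  (exists s, 0 < s /\ F_low x y s = Finite 0) /\
  (forall s, 0 < s -> F_up x y s = Finite 1).
Definition DC_pair2 (x y : Y) : Prop :=
  (exists s, 0 < s /\ Rbar_lt (F_low x y s) (Finite 1)) /\
  (forall s, 0 < s -> F_up x y s = Finite 1).

Definition DC_scrambled1 (A : Y -> Prop) : Prop :=
  set_two_elements A /\ forall x y, A x -> A y -> x <> y -> DC_pair1 x y.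
Definition DC_scrambled2 (A : Y -> Prop) : Prop :=
  set_two_elements A /\ forall x y, A x -> A y -> x <> y -> DC_pair2 x y.

Definition DCu1 : Prop := exists A, set_uncountable A /\ DC_scrambled1 A.
Definition DCinf1 : Prop := exists A, set_infinite A /\ DC_scrambled1 A.
Definition DC21 : Prop := exists A, DC_scrambled1 A.
Definition DCu2 : Prop := exists A, set_uncountable A /\ DC_scrambled2 A.
Definition DCinf2 : Prop := exists A, set_infinite A /\ DC_scrambled2 A.
Definition DC22 : Prop := exists A, DC_scrambled2 A.

Definition uniform_DC : Prop :=
  exists A, set_uncountable A /\ DC_scrambled1 A /\
    exists eps, 0 < eps /\
      forall x y, A x -> A y -> x <> y -> F_low x y eps = Finite 0.
End DC.

From Stdlib Require Import Reals List Arith Lia Lra Factorial.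
From Stdlib Require Import Classical ClassicalEpsilon IndefiniteDescription.
From Stdlib Require Import FunctionalExtensionality.
From Coquelicot Require Import Coquelicot.

(* If every point of [G] is quasi-periodic, no pair [x, y] is DC2.  Either [x] and [y]
   eventually agree along every orbit; then, since [d] is uniformly controlled by finitely
   many coordinates, [f^i x] and [f^i y] are eventually [s]-close and [F_xy(s) = 1].  Or
   they disagree infinitely often along some orbit, which is eventually periodic, hence
   at least once per period; a coordinate that uniformly separates points then gives
   [F*_xy(delta) < 1].

   Conversely, let [theta] have an infinite orbit.  Cut time into the blocks
   [[(2k)!, (2k+1)!)] (even) and [[(2k+1)!, (2k+2)!)] (odd), label the odd blocks so that
   every label recurs, and code [al : nat -> bool] by the point equal to [b0] on the
   odd-block part of the orbit of [theta] whose label carries [true], and [a0] elsewhere.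
   Each block dwarfs everything before it.  Two distinct codes differ at [theta] on a
   whole odd block infinitely often, so [F(delta) = 0]; on even blocks they agree on any
   finite set of coordinates up to a bounded time lag, so [F*(s) = 1].  The coding is
   injective, which gives an uncountable, uniformly scrambled set of type 1. *)

Section CountTrue.
Local Open Scope nat_scope.
Variable b : nat -> bool.

Fixpoint count_true (n : nat) : nat :=
  match n with
  | O => O
  | S m => count_true m + (if b m then 1 else 0)
  end.

Lemma count_true_le n : count_true n <= n.
Proof. induction n as [|n IH]; cbn [count_true]; [lia|destruct (b n); lia]. Qed.

Lemma count_true_mono m n : m <= n -> count_true m <= count_true n.
Proof. induction 1 as [|n _ IH]; cbn [count_true]; [lia|destruct (b n); lia]. Qed.

Lemma count_true_le_add m n : m <= n -> count_true n <= count_true m + (n - m).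
Proof. induction 1 as [|n Hmn IH]; cbn [count_true]; [lia|destruct (b n); lia]. Qed.

Lemma count_true_true_run L H : L <= H -> (forall i, L <= i < H -> b i = true) ->
  count_true H = count_true L + (H - L).
Proof.
induction 1 as [|H HLH IH]; intros Hrun; [lia|].
cbn [count_true]. rewrite IH by (intros; apply Hrun; lia). rewrite (Hrun H) by lia. lia.
Qed.

Lemma count_true_ge_run L H n : H <= n -> (forall i, L <= i < H -> b i = true) ->
  H - L <= count_true n.
Proof.
intros Hn Hrun. destruct (le_lt_dec L H) as [HLH|HLH]; [|lia].
pose proof (count_true_true_run L H HLH Hrun).
pose proof (count_true_mono H n Hn). lia.
Qed.

Lemma count_true_false_run L H : L <= H -> (forall i, L <= i < H -> b i = false) ->
  count_true H = count_true L.
Proof.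
induction 1 as [|H HLH IH]; intros Hrun; [lia|].
cbn [count_true]. rewrite IH by (intros; apply Hrun; lia). rewrite (Hrun H) by lia. lia.
Qed.

Lemma count_true_window_false w p i : w <= i < w + p -> b i = false ->
  count_true (w + p) + 1 <= count_true w + p.
Proof.
intros Hi Hbi.
assert (Hskip : count_true (S i) = count_true i) by (cbn [count_true]; rewrite Hbi; lia).
pose proof (count_true_le_add w i ltac:(lia)).
pose proof (count_true_le_add (S i) (w + p) ltac:(lia)).
lia.
Qed.

(* Each window of length [p] contributes at most [p - 1]; the weaker density [1 - 1/(2p)]
   absorbs the initial segment and the last partial window. *)
Lemma count_true_le_of_gaps p i0 : 0 < p ->
  (forall w, i0 <= w -> exists i, w <= i < w + p /\ b i = false) ->
  forall m, 2 * i0 + 2 * p <= m -> 2 * p * count_true m <= (2 * p - 1) * m.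
Proof.
intros Hp Hgaps.
assert (Hbound : forall r, p * count_true (i0 + r) <= p * i0 + (p - 1) * (r + 1)).
{ intros r. induction r as [r IH] using lt_wf_ind.
  destruct (Nat.lt_ge_cases r p) as [Hr|Hr].
  - pose proof (count_true_le (i0 + r)). nia.
  - specialize (IH (r - p) ltac:(lia)).
    destruct (Hgaps (i0 + (r - p)) ltac:(lia)) as [i [Hi Hbi]].
    pose proof (count_true_window_false _ _ _ Hi Hbi) as Hw.
    replace (i0 + (r - p) + p) with (i0 + r) in Hw by lia. nia. }
intros m Hm. specialize (Hbound (m - i0)).
replace (i0 + (m - i0)) with m in Hbound by lia. nia.
Qed.

End CountTrue.

Local Open Scope R_scope.

Definition freq (b : nat -> bool) (n : nat) : R := INR (count_true b (S n)) / INR (S n).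

Lemma INR_S_pos n : 0 < INR (S n).
Proof. apply lt_0_INR; lia. Qed.

Lemma freq_nonneg b n : 0 <= freq b n.
Proof.
unfold freq. apply Rmult_le_pos; [apply pos_INR|left; apply Rinv_0_lt_compat, INR_S_pos].
Qed.

Lemma freq_le_1 b n : freq b n <= 1.
Proof.
unfold freq. apply Rle_div_l; [apply INR_S_pos|].
rewrite Rmult_1_l. apply le_INR, count_true_le.
Qed.

Lemma freq_le_inv b n M : (0 < M)%nat -> (M * count_true b (S n) <= S n)%nat ->
  freq b n <= / INR M.
Proof.
intros HM Hc. apply le_INR in Hc. rewrite mult_INR in Hc.
assert (0 < INR M) by (apply lt_0_INR; lia).
pose proof (INR_S_pos n).
unfold freq. apply Rle_div_l; [lra|].
apply Rmult_le_reg_l with (INR M); [lra|].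
replace (INR M * (/ INR M * INR (S n))) with (INR (S n)) by (field; lra). lra.
Qed.

Lemma freq_ge_1_minus_inv b n M : (0 < M)%nat ->
  (M * (S n - count_true b (S n)) <= S n)%nat -> 1 - / INR M <= freq b n.
Proof.
intros HM Hc. pose proof (count_true_le b (S n)) as Hle.
apply le_INR in Hc. rewrite mult_INR, minus_INR in Hc by exact Hle.
assert (0 < INR M) by (apply lt_0_INR; lia).
pose proof (INR_S_pos n).
unfold freq. apply Rle_div_r; [lra|].
apply Rmult_le_reg_l with (INR M); [lra|].
replace (INR M * ((1 - / INR M) * INR (S n))) with (INR M * INR (S n) - INR (S n))
  by (field; lra). lra.
Qed.

Lemma exists_nat_inv_lt eps : 0 < eps -> exists M, (0 < M)%nat /\ / INR M < eps.
Proof.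
intros He. destruct (nfloor_ex (/ eps)) as [k Hk]; [left; apply Rinv_0_lt_compat, He|].
exists (S k). split; [lia|]. rewrite S_INR.
rewrite <- (Rinv_inv eps). apply Rinv_lt_contravar; [|lra].
apply Rmult_lt_0_compat; [apply Rinv_0_lt_compat, He|pose proof (pos_INR k); lra].
Qed.

Lemma LimInf_freq_eq0 b :
  (forall M N, exists n, (N <= n)%nat /\ (M * count_true b (S n) <= S n)%nat) ->
  LimInf_seq (freq b) = 0.
Proof.
intros Hsparse. apply is_LimInf_seq_unique. intros eps. split.
- intros N. destruct (exists_nat_inv_lt eps (cond_pos eps)) as [M [HM Hinv]].
  destruct (Hsparse M N) as [n [Hn Hc]]. exists n. split; [exact Hn|].
  pose proof (freq_le_inv b n M HM Hc). lra.
- exists O. intros n _. pose proof (freq_nonneg b n). pose proof (cond_pos eps). lra.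
Qed.

Lemma LimSup_freq_eq1 b :
  (forall M N, exists n, (N <= n)%nat /\ (M * (S n - count_true b (S n)) <= S n)%nat) ->
  LimSup_seq (freq b) = 1.
Proof.
intros Hdense. apply is_LimSup_seq_unique. intros eps. split.
- intros N. destruct (exists_nat_inv_lt eps (cond_pos eps)) as [M [HM Hinv]].
  destruct (Hdense M N) as [n [Hn Hc]]. exists n. split; [exact Hn|].
  pose proof (freq_ge_1_minus_inv b n M HM Hc). lra.
- exists O. intros n _. pose proof (freq_le_1 b n). pose proof (cond_pos eps). lra.
Qed.

Lemma LimInf_freq_eventually_true b N : (forall i, (N <= i)%nat -> b i = true) ->
  LimInf_seq (freq b) = 1.
Proof.
intros Htrue. apply is_LimInf_seq_unique. intros eps. split.
- intros N'. exists N'. split; [lia|]. pose proof (freq_le_1 b N'). pose proof (cond_pos eps). lra.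
- destruct (exists_nat_inv_lt eps (cond_pos eps)) as [M [HM Hinv]].
  exists (M * N)%nat. intros n Hn.
  pose proof (count_true_ge_run b N (S n) (S n) (le_n _) (fun i Hi => Htrue i (proj1 Hi))).
  pose proof (freq_ge_1_minus_inv b n M HM ltac:(nia)). lra.
Qed.

Lemma LimSup_freq_lt1_of_gaps b p i0 : (0 < p)%nat ->
  (forall w, (i0 <= w)%nat -> exists i, (w <= i < w + p)%nat /\ b i = false) ->
  Rbar_lt (LimSup_seq (freq b)) 1.
Proof.
intros Hp Hgaps.
assert (Hp' : 0 < INR p) by (apply lt_0_INR; exact Hp).
apply Rbar_le_lt_trans with (1 - / (2 * INR p)).
- rewrite <- LimSup_seq_const. apply LimSup_le.
  exists (2 * i0 + 2 * p)%nat. intros n Hn.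
  pose proof (count_true_le_of_gaps b p i0 Hp Hgaps (S n) ltac:(lia)) as Hc.
  apply le_INR in Hc. rewrite !mult_INR, minus_INR, mult_INR in Hc by lia.
  replace (INR 2) with 2 in Hc by (simpl; lra). change (INR 1) with 1 in Hc.
  pose proof (INR_S_pos n).
  unfold freq. apply Rle_div_l; [lra|].
  apply Rmult_le_reg_l with (2 * INR p); [lra|].
  replace (2 * INR p * ((1 - / (2 * INR p)) * INR (S n))) with ((2 * INR p - 1) * INR (S n))
    by (field; lra). lra.
- simpl. assert (0 < / (2 * INR p)) by (apply Rinv_0_lt_compat; lra). lra.
Qed.

Definition close_times {Y : Type} (d : Y -> Y -> R) (f : Y -> Y) (x y : Y) (t : R)
  (i : nat) : bool :=
  if Rlt_dec (d (Nat.iter i f x) (Nat.iter i f y)) t then true else false.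

Lemma xi_count_true {Y : Type} (d : Y -> Y -> R) f x y t n :
  xi d f x y t n = INR (count_true (close_times d f x y t) n).
Proof.
induction n as [|n IH]; [reflexivity|].
cbn [xi count_true]. rewrite IH, plus_INR. unfold close_times.
destruct (Rlt_dec _ t); simpl; ring.
Qed.

Lemma F_low_freq {Y : Type} (d : Y -> Y -> R) f x y t :
  F_low d f x y t = LimInf_seq (freq (close_times d f x y t)).
Proof.
unfold F_low, freq. f_equal. apply functional_extensionality. intros n.
rewrite xi_count_true. reflexivity.
Qed.

Lemma F_up_freq {Y : Type} (d : Y -> Y -> R) f x y t :
  F_up d f x y t = LimSup_seq (freq (close_times d f x y t)).
Proof.
unfold F_up, freq. f_equal. apply functional_extensionality. intros n.
rewrite xi_count_true. reflexivity.
Qed.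

Lemma iter_gen_shift {X G : Type} (phi : G -> G) (x : G -> X) i g :
  Nat.iter i (gen_shift phi) x g = x (Nat.iter i phi g).
Proof.
revert g. induction i as [|i IH]; intros g; [reflexivity|].
change (Nat.iter i (gen_shift phi) x (phi g) = x (Nat.iter (S i) phi g)).
rewrite IH, Nat.iter_succ_r. reflexivity.
Qed.

Local Close Scope R_scope.

Lemma list_uniform_bound {T : Type} (P : T -> nat -> Prop) :
  (forall t A B, A <= B -> P t A -> P t B) -> (forall t, exists A, P t A) ->
  forall l : list T, exists A, forall t, In t l -> P t A.
Proof.
intros Hmono Hex l. induction l as [|t l [A HA]]; [exists 0; intros _ []|].
destruct (Hex t) as [B HB]. exists (Nat.max A B).
intros t' [<-|Ht']; eapply Hmono; [|exact HB| |exact (HA t' Ht')]; lia.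
Qed.

Lemma list_enc_bound {G : Type} (enc : G -> nat) (F : list G) :
  exists K, forall g, In g F -> enc g < K.
Proof.
apply (list_uniform_bound (fun g K => enc g < K)); [intros; lia|].
intros g. exists (S (enc g)). lia.
Qed.

Lemma finite_range_collision {A : Type} (h : nat -> A) (l : list A) :
  (forall i, In (h i) l) -> exists a b, a < b /\ h a = h b.
Proof.
intros Hl. apply NNPP. intros Hinj.
assert (Hnodup : NoDup (map h (seq 0 (S (length l))))).
{ apply NoDup_map_NoDup_ForallPairs; [|apply seq_NoDup].
  intros a b _ _ E. destruct (Nat.lt_total a b) as [H|[H|H]]; [|exact H|];
    exfalso; apply Hinj; eauto. }
assert (Hincl : incl (map h (seq 0 (S (length l)))) l).
{ intros z Hz. apply in_map_iff in Hz as [i [<- _]]. apply Hl. }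
pose proof (NoDup_incl_length Hnodup Hincl) as Hlen.
rewrite length_map, length_seq in Hlen. lia.
Qed.

Section Orbits.
Context {G : Type} (phi : G -> G).

Lemma quasi_periodic_eventually_periodic g : quasi_periodic phi g ->
  exists N p, 0 < p /\ forall i, N <= i -> Nat.iter (i + p) phi g = Nat.iter i phi g.
Proof.
intros [l Hl].
destruct (finite_range_collision (fun n => Nat.iter n phi g) l) as [a [b [Hab E]]].
{ intros i. apply Hl. eauto. }
exists a, (b - a). split; [lia|]. intros i Hi.
replace (i + (b - a)) with ((i - a) + b) by lia.
rewrite Nat.iter_add, <- E, <- Nat.iter_add. f_equal. lia.
Qed.

Lemma orbit_injective_of_not_quasi_periodic th : ~ quasi_periodic phi th ->
  forall a b, Nat.iter a phi th = Nat.iter b phi th -> a = b.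
Proof.
intros Hnqp.
assert (Hlt : forall a b, a < b -> Nat.iter a phi th <> Nat.iter b phi th).
{ intros a b Hab E. apply Hnqp. exists (map (fun i => Nat.iter i phi th) (seq 0 b)).
  intros z [n ->]. induction n as [n IH] using lt_wf_ind.
  destruct (Nat.lt_ge_cases n b) as [Hn|Hn].
  - apply (in_map (fun i => Nat.iter i phi th)), in_seq. lia.
  - replace n with ((n - b) + b) by lia. rewrite Nat.iter_add, <- E, <- Nat.iter_add.
    apply IH. lia. }
intros a b E. destruct (Nat.lt_total a b) as [H|[H|H]]; [|exact H|];
  exfalso; [exact (Hlt a b H E)|exact (Hlt b a H (eq_sym E))].
Qed.

(* [i - m] is the same for all such pairs, because the orbit of [th] is injective. *)
Lemma orbit_entry_lag_bounded th : (forall a b, Nat.iter a phi th = Nat.iter b phi th -> a = b) ->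
  forall g, exists A, forall i m, Nat.iter i phi g = Nat.iter m phi th -> i <= m + A /\ m <= i + A.
Proof.
intros Hinj g.
destruct (classic (exists i0 m0, Nat.iter i0 phi g = Nat.iter m0 phi th)) as [[i0 [m0 E0]]|Hnone].
- exists (i0 + m0). intros i m E.
  enough (m + i0 = i + m0) by lia.
  destruct (Nat.le_gt_cases i i0) as [Hi|Hi].
  + assert (E' : Nat.iter (i0 - i + m) phi th = Nat.iter m0 phi th).
    { rewrite Nat.iter_add, <- E, <- Nat.iter_add, <- E0. f_equal. lia. }
    apply Hinj in E'. lia.
  + assert (E' : Nat.iter (i - i0 + m0) phi th = Nat.iter m phi th).
    { rewrite Nat.iter_add, <- E0, <- Nat.iter_add, <- E. f_equal. lia. }
    apply Hinj in E'. lia.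
- exists 0. intros i m E. exfalso. eauto.
Qed.

End Orbits.

Definition infinitely_often (P : nat -> Prop) : Prop := forall N, exists n, N <= n /\ P n.

Lemma infinitely_often_pigeonhole {A : Type} (l : list A) (P : nat -> Prop) (h : nat -> A) :
  infinitely_often P -> (forall n, P n -> In (h n) l) ->
  exists c, infinitely_often (fun n => P n /\ h n = c).
Proof.
revert P. induction l as [|c l IH]; intros P HP Hin.
- destruct (HP 0) as [n [_ Hn]]. destruct (Hin n Hn).
- destruct (classic (infinitely_often (fun n => P n /\ h n = c))) as [Hc|Hc]; [eauto|].
  assert (HN0 : exists N0, forall n, N0 <= n -> P n -> h n <> c).
  { apply NNPP. intros Hne. apply Hc. intros N. apply NNPP. intros Hno.
    apply Hne. exists N. intros n Hn Pn E. apply Hno. eauto. }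
  destruct HN0 as [N0 HN0].
  destruct (IH (fun n => P n /\ N0 <= n)) as [c' Hc'].
  + intros N. destruct (HP (Nat.max N N0)) as [n [Hn Pn]].
    exists n. repeat split; [lia|exact Pn|lia].
  + intros n [Pn Hn]. destruct (Hin n Pn) as [E|]; [|assumption].
    exfalso. exact (HN0 n Hn Pn (eq_sym E)).
  + exists c'. intros N. destruct (Hc' N) as [n [Hn [[Pn _] E]]]. eauto.
Qed.

Lemma finite_enc_prefix {G : Type} (enc : G -> nat) (Hinj : forall a b, enc a = enc b -> a = b) n :
  exists l, forall g, enc g < n -> In g l.
Proof.
induction n as [|n [l Hl]]; [exists nil; intros; lia|].
destruct (classic (exists g, enc g = n)) as [[g0 Hg0]|Hnone].
- exists (g0 :: l). intros g Hg. destruct (Nat.eq_dec (enc g) n) as [E|E].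
  + left. apply Hinj. congruence.
  + right. apply Hl. lia.
- exists l. intros g Hg. destruct (Nat.eq_dec (enc g) n) as [E|E]; [exfalso; eauto|].
  apply Hl. lia.
Qed.

(* Sequential compactness of [G -> X] for finite [X] and countable [G], by the diagonal
   argument: [refined k] collects the indices [n] at which [u n] agrees with the limit
   candidate on all coordinates coded below [k]; the value on code [k] is one that is
   taken infinitely often among those indices. *)
Section ClusterPoint.
Context {X G : Type} (x0 : X) (enc : G -> nat) (u : nat -> G -> X).

Fixpoint refined (k : nat) : nat -> Prop :=
  match k with
  | O => fun _ => True
  | S k' =>
      let c := epsilon (inhabits x0)
        (fun c => infinitely_often (fun n => refined k' n /\ forall g, enc g = k' -> u n g = c)) in
      fun n => refined k' n /\ forall g, enc g = k' -> u n g = c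
  end.

Definition layer_value (k : nat) : X :=
  epsilon (inhabits x0)
    (fun c => infinitely_often (fun n => refined k n /\ forall g, enc g = k -> u n g = c)).

Definition cluster_point (g : G) : X := layer_value (enc g).

Lemma refined_S k n :
  refined (S k) n <-> refined k n /\ forall g, enc g = k -> u n g = layer_value k.
Proof. reflexivity. Qed.

Lemma refined_agree K n : refined K n -> forall g, enc g < K -> u n g = cluster_point g.
Proof.
induction K as [|K IH]; intros HK g Hg; [lia|].
apply refined_S in HK as [HK Hlayer].
destruct (Nat.eq_dec (enc g) K) as [E|E].
- unfold cluster_point. rewrite E. exact (Hlayer g E).
- apply IH; [exact HK|lia].
Qed.

Variables (lx : list X) (Hlx : forall a, In a lx).
Hypothesis Hinj : forall a b, enc a = enc b -> a = b.

Lemma refined_infinitely_often k : infinitely_often (refined k).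
Proof.
induction k as [|k IH]; [intros N; exists N; split; [lia|exact I]|].
assert (Hval : exists c, infinitely_often
                 (fun n => refined k n /\ forall g, enc g = k -> u n g = c)).
{ destruct (classic (exists g0, enc g0 = k)) as [[g0 Hg0]|Hnone].
  - destruct (infinitely_often_pigeonhole lx (refined k) (fun n => u n g0) IH)
      as [c Hc]; [intros; apply Hlx|].
    exists c. intros N. destruct (Hc N) as [n [Hn [Rn E]]].
    exists n. repeat split; [exact Hn|exact Rn|].
    intros g Hg. rewrite (Hinj g g0) by congruence. exact E.
  - exists x0. intros N. destruct (IH N) as [n [Hn Rn]].
    exists n. repeat split; [exact Hn|exact Rn|].
    intros g Hg. exfalso. eauto. }
intros N. destruct (epsilon_spec (inhabits x0) _ Hval N) as [n [Hn Rn]].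
exists n. split; [exact Hn|]. apply refined_S. exact Rn.
Qed.

Lemma cluster_point_frequently (F : list G) N :
  exists n, N <= n /\ forall g, In g F -> u n g = cluster_point g.
Proof.
destruct (list_enc_bound enc F) as [K HK].
destruct (refined_infinitely_often K N) as [n [Hn Rn]].
exists n. split; [exact Hn|]. intros g Hg. exact (refined_agree K n Rn g (HK g Hg)).
Qed.

End ClusterPoint.

Lemma le_fact n : n <= fact n.
Proof.
induction n as [|n IH]; [simpl; lia|].
change (fact (S n)) with (S n * fact n). pose proof (lt_O_fact n). nia.
Qed.

(* Writing [k = n * n + j] with [j <= 2 * n], the label is [j]; so every label recurs. *)
Definition block_label (k : nat) : nat := k - Nat.sqrt k * Nat.sqrt k.

Lemma block_label_infinitely_often j N : exists k, N <= k /\ block_label k = j.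
Proof.
set (n := Nat.max N j). exists (n * n + j). split; [nia|].
unfold block_label. rewrite (Nat.sqrt_unique (n * n + j) n); [lia|nia].
Qed.

Definition even_block (k m : nat) : Prop := fact (2 * k) <= m < fact (2 * k + 1).
Definition odd_block (k m : nat) : Prop := fact (2 * k + 1) <= m < fact (2 * k + 2).

Lemma odd_block_unique k k' m : odd_block k m -> odd_block k' m -> k = k'.
Proof.
unfold odd_block. intros H1 H2. destruct (Nat.lt_total k k') as [H|[H|H]]; [|exact H|].
- pose proof (fact_le (2 * k + 2) (2 * k' + 1) ltac:(lia)). lia.
- pose proof (fact_le (2 * k' + 2) (2 * k + 1) ltac:(lia)). lia.
Qed.

Lemma even_block_not_odd_block k k' m : even_block k m -> ~ odd_block k' m.
Proof.
unfold even_block, odd_block. intros H1 H2. destruct (Nat.le_gt_cases k k') as [H|H].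
- pose proof (fact_le (2 * k + 1) (2 * k' + 1) ltac:(lia)). lia.
- pose proof (fact_le (2 * k' + 2) (2 * k) ltac:(lia)). lia.
Qed.

Lemma odd_block_start k : odd_block k (fact (2 * k + 1)).
Proof.
unfold odd_block. replace (2 * k + 2) with (S (2 * k + 1)) by lia.
change (fact (S (2 * k + 1))) with (S (2 * k + 1) * fact (2 * k + 1)).
pose proof (lt_O_fact (2 * k + 1)). lia.
Qed.

Section Coding.
Context {X G : Type} (phi : G -> G) (th : G) (a0 b0 : X).

Definition coded_point (al : nat -> bool) (g : G) : X :=
  if excluded_middle_informative
       (exists m k, g = Nat.iter m phi th /\ odd_block k m /\ al (block_label k) = true)
  then b0 else a0.

Lemma coded_point_outside_odd_blocks al z :
  (forall m k, z = Nat.iter m phi th -> ~ odd_block k m) -> coded_point al z = a0.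
Proof.
intros Hz. unfold coded_point.
destruct (excluded_middle_informative _) as [[m [k [E [Hk _]]]]|_]; [|reflexivity].
exfalso. exact (Hz m k E Hk).
Qed.

Hypothesis Horbit : forall a b, Nat.iter a phi th = Nat.iter b phi th -> a = b.

Lemma coded_point_odd_block al k m : odd_block k m ->
  coded_point al (Nat.iter m phi th) = if al (block_label k) then b0 else a0.
Proof.
intros Hkm. unfold coded_point.
destruct (excluded_middle_informative _) as [[m' [k' [E [Hk' Hal]]]]|Hno].
- apply Horbit in E. subst m'. rewrite (odd_block_unique k k' m Hkm Hk'), Hal. reflexivity.
- destruct (al (block_label k)) eqn:Hal; [|reflexivity]. exfalso. apply Hno. eauto.
Qed.

Hypothesis Hab : a0 <> b0.

Lemma coded_point_differ al be k m :
  al (block_label k) <> be (block_label k) -> odd_block k m ->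
  coded_point al (Nat.iter m phi th) <> coded_point be (Nat.iter m phi th).
Proof.
intros Hne Hkm. rewrite !(coded_point_odd_block _ k m Hkm).
destruct (al (block_label k)), (be (block_label k)); congruence.
Qed.

Lemma coded_point_injective al be : coded_point al = coded_point be -> al = be.
Proof.
intros E. apply functional_extensionality. intros j. apply NNPP. intros Hne.
destruct (block_label_infinitely_often j 0) as [k [_ Hk]].
apply (coded_point_differ al be k (fact (2 * k + 1))).
- rewrite Hk. exact Hne.
- apply odd_block_start.
- rewrite E. reflexivity.
Qed.

End Coding.

Lemma no_injection_bool_seq_nat (h : (nat -> bool) -> nat) :
  ~ (forall a b, h a = h b -> a = b).
Proof.
intros Hinj.
set (g := fun n => epsilon (inhabits (fun _ : nat => false)) (fun a => h a = n)).
set (diag := fun k => negb (g k k)).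
assert (E : g (h diag) = diag).
{ apply Hinj. exact (epsilon_spec (inhabits (fun _ : nat => false)) (fun a => h a = h diag)
                       (ex_intro _ diag eq_refl)). }
assert (Hdiag : diag (h diag) = negb (g (h diag) (h diag))) by reflexivity.
rewrite E in Hdiag. destruct (diag (h diag)); discriminate.
Qed.

Local Open Scope R_scope.

Section ProductMetric.
Context {X G : Type} (x0 : X) (lx : list X) (Hlx : forall a, In a lx)
  (enc : G -> nat) (Hinj : forall a b, enc a = enc b -> a = b)
  (d : (G -> X) -> (G -> X) -> R) (Hd : is_metric d) (Hdc : compatible_product_metric d).

(* Both lemmas are uniform versions of the two halves of compatibility; uniformity comes
   from compactness, through [cluster_point]. *)
Lemma metric_lt_of_agree_on eps : 0 < eps ->
  exists F : list G, forall u v, (forall g, In g F -> u g = v g) -> d u v < eps.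
Proof.
intros He. apply NNPP. intros Hno.
assert (Hbad : forall n, exists p : (G -> X) * (G -> X),
  (forall g, (enc g < n)%nat -> fst p g = snd p g) /\ ~ d (fst p) (snd p) < eps).
{ intros n. destruct (finite_enc_prefix enc Hinj n) as [l Hl].
  apply NNPP. intros Hq. apply Hno. exists l. intros u v Huv.
  apply NNPP. intros Hfar. apply Hq. exists (u, v).
  split; [intros g Hg; apply Huv, Hl, Hg|exact Hfar]. }
destruct (functional_choice _ Hbad) as [P HP].
destruct Hd as [_ [_ [Hsym Htri]]].
pose (w := cluster_point x0 enc (fun n => fst (P n))).
destruct (proj1 Hdc w (eps / 2) ltac:(lra)) as [F HF].
destruct (list_enc_bound enc F) as [K HK].
destruct (cluster_point_frequently x0 enc (fun n => fst (P n)) lx Hlx Hinj F K)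
  as [n [Hn Hagree]].
destruct (HP n) as [Heq Hfar]. apply Hfar.
assert (H1 : d w (fst (P n)) < eps / 2) by (apply HF; exact Hagree).
assert (H2 : d w (snd (P n)) < eps / 2).
{ apply HF. intros g Hg. rewrite <- Heq by (specialize (HK g Hg); lia). exact (Hagree g Hg). }
pose proof (Htri (fst (P n)) w (snd (P n))) as H3. rewrite (Hsym (fst (P n)) w) in H3. lra.
Qed.

Lemma coord_eq_of_metric_lt g :
  exists delta, 0 < delta /\ forall u v, d u v < delta -> u g = v g.
Proof.
apply NNPP. intros Hno.
assert (Hbad : forall n, exists p : (G -> X) * (G -> X),
  d (fst p) (snd p) < / INR (S n) /\ fst p g <> snd p g).
{ intros n. apply NNPP. intros Hq. apply Hno. exists (/ INR (S n)).
  split; [apply Rinv_0_lt_compat, INR_S_pos|].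
  intros u v Huv. apply NNPP. intros Hne. apply Hq. exists (u, v). split; assumption. }
destruct (functional_choice _ Hbad) as [P HP].
destruct Hd as [_ [_ [Hsym Htri]]].
pose (w := cluster_point x0 enc (fun n => fst (P n))).
destruct (proj2 Hdc w g) as [del [Hdel Hsep]].
destruct (proj1 Hdc w (del / 2) ltac:(lra)) as [F HF].
destruct (exists_nat_inv_lt (del / 2) ltac:(lra)) as [M [HM Hinv]].
destruct (cluster_point_frequently x0 enc (fun n => fst (P n)) lx Hlx Hinj F M)
  as [n [Hn Hagree]].
destruct (HP n) as [Hclose Hne]. apply Hne.
assert (H1 : d w (fst (P n)) < del / 2) by (apply HF; exact Hagree).
assert (H2 : / INR (S n) <= / INR M).
{ apply Rinv_le_contravar; [apply lt_0_INR; exact HM|apply le_INR; lia]. }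
pose proof (Htri w (fst (P n)) (snd (P n))).
rewrite (Hsep (fst (P n))) by lra. rewrite (Hsep (snd (P n))) by lra. reflexivity.
Qed.

Variable phi : G -> G.

Lemma F_low_shift_eq1_of_eventually_agree (x y : G -> X) :
  (forall g, exists N, forall i, (N <= i)%nat -> x (Nat.iter i phi g) = y (Nat.iter i phi g)) ->
  forall s, 0 < s -> F_low d (gen_shift phi) x y s = 1.
Proof.
intros Hagree s Hs.
destruct (metric_lt_of_agree_on s Hs) as [F HF].
destruct (list_uniform_bound
  (fun g N => forall i, (N <= i)%nat -> x (Nat.iter i phi g) = y (Nat.iter i phi g)))
  with (l := F) as [N HN]; [intros g A B HAB HA i Hi; apply HA; lia|exact Hagree|].
rewrite F_low_freq. apply (LimInf_freq_eventually_true _ N).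
intros i Hi. unfold close_times. destruct (Rlt_dec _ _) as [_|Hfar]; [reflexivity|].
exfalso. apply Hfar, HF. intros g Hg. rewrite !iter_gen_shift. exact (HN g Hg i Hi).
Qed.

(* On an eventually periodic orbit, one late disagreement recurs with the period, so the
   coordinate [g] separates [f^i x] from [f^i y] at least once in every period. *)
Lemma F_up_shift_lt1_of_recurrent_disagreement (x y : G -> X) g :
  quasi_periodic phi g ->
  (forall N, exists i, (N <= i)%nat /\ x (Nat.iter i phi g) <> y (Nat.iter i phi g)) ->
  exists s, 0 < s /\ Rbar_lt (F_up d (gen_shift phi) x y s) 1.
Proof.
intros Hqp Hdis.
destruct (quasi_periodic_eventually_periodic phi g Hqp) as [N0 [p [Hp Hper]]].
destruct (Hdis N0) as [i0 [Hi0 Hne]].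
destruct (coord_eq_of_metric_lt g) as [del [Hdel Hsep]].
exists del. split; [exact Hdel|]. rewrite F_up_freq.
apply (LimSup_freq_lt1_of_gaps _ p i0 Hp).
assert (Hwin : forall r, exists i, (i0 + r <= i < i0 + r + p)%nat /\ (N0 <= i)%nat /\
                 x (Nat.iter i phi g) <> y (Nat.iter i phi g)).
{ induction r as [|r [i [Hi [HNi Hnei]]]]; [exists i0; repeat split; auto; lia|].
  destruct (Nat.eq_dec i (i0 + r)) as [->|Hir].
  - exists (i0 + r + p)%nat. repeat split; [lia|lia|lia|]. rewrite Hper by lia. exact Hnei.
  - exists i. repeat split; auto; lia. }
intros w Hw. destruct (Hwin (w - i0)%nat) as [i [Hi [_ Hnei]]].
exists i. split; [lia|]. unfold close_times.
destruct (Rlt_dec _ _) as [Hclose|_]; [|reflexivity].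
exfalso. apply Hnei. specialize (Hsep _ _ Hclose). rewrite !iter_gen_shift in Hsep. exact Hsep.
Qed.

Lemma DC_pair2_shift_non_quasi_periodic (x y : G -> X) :
  DC_pair2 d (gen_shift phi) x y -> has_non_quasi_periodic phi.
Proof.
intros [[s0 [Hs0 Hlow]] Hup]. apply NNPP. intros Hnone.
assert (Hqp : forall g, quasi_periodic phi g).
{ intros g. apply NNPP. intros H. apply Hnone. exists g. exact H. }
destruct (classic (forall g, exists N, forall i, (N <= i)%nat ->
                     x (Nat.iter i phi g) = y (Nat.iter i phi g))) as [Hagree|Hrec].
- rewrite (F_low_shift_eq1_of_eventually_agree x y Hagree s0 Hs0) in Hlow.
  simpl in Hlow. lra.
- apply not_all_ex_not in Hrec as [g Hg].
  assert (Hdis : forall N, exists i, (N <= i)%nat /\ x (Nat.iter i phi g) <> y (Nat.iter i phi g)).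
  { intros N. apply NNPP. intros HN. apply Hg. exists N. intros i Hi.
    apply NNPP. intros Hne. apply HN. eauto. }
  destruct (F_up_shift_lt1_of_recurrent_disagreement x y g (Hqp g) Hdis) as [s [Hs Hlt]].
  rewrite (Hup s Hs) in Hlt. simpl in Hlt. lra.
Qed.

Variables (a0 b0 : X) (Hab : a0 <> b0).

Section CodedPoints.
Variable th : G.
Hypothesis Horbit : forall a b, Nat.iter a phi th = Nat.iter b phi th -> a = b.

Let code := coded_point phi th a0 b0.

Lemma coded_points_far_on_odd_blocks del al be k i :
  (forall u v, d u v < del -> u th = v th) ->
  al (block_label k) <> be (block_label k) -> odd_block k i ->
  close_times d (gen_shift phi) (code al) (code be) del i = false.
Proof.
intros Hsep Hne Hki. unfold close_times.
destruct (Rlt_dec _ _) as [Hclose|_]; [|reflexivity].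
exfalso. apply (coded_point_differ phi th a0 b0 Horbit Hab al be k i Hne Hki).
specialize (Hsep _ _ Hclose). rewrite !iter_gen_shift in Hsep. exact Hsep.
Qed.

Lemma coded_points_close_inside_even_blocks al be s : 0 < s ->
  exists A, forall k i, (fact (2 * k) + A <= i < fact (2 * k + 1) - A)%nat ->
    close_times d (gen_shift phi) (code al) (code be) s i = true.
Proof.
intros Hs.
destruct (metric_lt_of_agree_on s Hs) as [F HF].
destruct (list_uniform_bound (fun g A => forall i m,
  Nat.iter i phi g = Nat.iter m phi th -> (i <= m + A /\ m <= i + A)%nat)) with (l := F)
  as [A HA].
{ intros g A B HAB HA i m E. specialize (HA i m E). lia. }
{ exact (orbit_entry_lag_bounded phi th Horbit). }
exists A. intros k i Hi. unfold close_times.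
destruct (Rlt_dec _ _) as [_|Hfar]; [reflexivity|].
exfalso. apply Hfar, HF. intros g Hg. rewrite !iter_gen_shift.
assert (Heven : forall m k', Nat.iter i phi g = Nat.iter m phi th -> ~ odd_block k' m).
{ intros m k' E. apply (even_block_not_odd_block k). specialize (HA g Hg i m E).
  unfold even_block. lia. }
unfold code. rewrite !coded_point_outside_odd_blocks by exact Heven. reflexivity.
Qed.

Lemma F_low_coded_eq0 del al be : (forall u v, d u v < del -> u th = v th) -> al <> be ->
  F_low d (gen_shift phi) (code al) (code be) del = 0.
Proof.
intros Hsep Hne.
destruct (not_all_ex_not _ _ (fun H => Hne (functional_extensionality al be H))) as [j Hj].
rewrite F_low_freq. apply LimInf_freq_eq0. intros M N.
destruct (block_label_infinitely_often j (M + N)) as [k [Hk Hlabel]].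
set (b := close_times d (gen_shift phi) (code al) (code be) del).
pose proof (lt_O_fact (2 * k + 1)). pose proof (le_fact (2 * k + 1)).
assert (Hfact : fact (2 * k + 2) = ((2 * k + 2) * fact (2 * k + 1))%nat).
{ replace (2 * k + 2)%nat with (S (2 * k + 1)) by lia. reflexivity. }
exists (fact (2 * k + 2) - 1)%nat. split; [nia|].
replace (S (fact (2 * k + 2) - 1)) with (fact (2 * k + 2)) by nia.
rewrite (count_true_false_run b (fact (2 * k + 1)) (fact (2 * k + 2)) ltac:(nia)).
- pose proof (count_true_le b (fact (2 * k + 1))). nia.
- intros i Hi. apply (coded_points_far_on_odd_blocks del al be k i Hsep); [congruence|exact Hi].
Qed.

Lemma F_up_coded_eq1 al be s : 0 < s -> F_up d (gen_shift phi) (code al) (code be) s = 1.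
Proof.
intros Hs. destruct (coded_points_close_inside_even_blocks al be s Hs) as [A Htrue].
rewrite F_up_freq. apply LimSup_freq_eq1. intros M N.
set (k := (N + M * (1 + 2 * A))%nat).
set (b := close_times d (gen_shift phi) (code al) (code be) s).
pose proof (lt_O_fact (2 * k)). pose proof (le_fact (2 * k)).
assert (Hfact : fact (2 * k + 1) = ((2 * k + 1) * fact (2 * k))%nat).
{ replace (2 * k + 1)%nat with (S (2 * k)) by lia. reflexivity. }
exists (fact (2 * k + 1) - 1)%nat. split; [nia|].
replace (S (fact (2 * k + 1) - 1)) with (fact (2 * k + 1)) by nia.
pose proof (count_true_ge_run b _ _ (fact (2 * k + 1)) (Nat.le_sub_l _ _) (Htrue k)).
pose proof (count_true_le b (fact (2 * k + 1))).
assert (Hmiss : (fact (2 * k + 1) - count_true b (fact (2 * k + 1)) <= fact (2 * k) + 2 * A)%nat)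
  by lia.
nia.
Qed.

End CodedPoints.

Lemma uniform_DC_of_non_quasi_periodic :
  has_non_quasi_periodic phi -> uniform_DC d (gen_shift phi).
Proof.
intros [th Hth].
pose proof (orbit_injective_of_not_quasi_periodic phi th Hth) as Horbit.
destruct (coord_eq_of_metric_lt th) as [del [Hdel Hsep]].
set (code := coded_point phi th a0 b0).
pose proof (coded_point_injective phi th a0 b0 Horbit Hab) as Hcode.
assert (Hpair : forall z z', (exists al, z = code al) -> (exists be, z' = code be) -> z <> z' ->
                  F_low d (gen_shift phi) z z' del = 0 /\ DC_pair1 d (gen_shift phi) z z').
{ intros z z' [al ->] [be ->] Hne.
  assert (Hal : al <> be) by (intros ->; exact (Hne eq_refl)).
  pose proof (F_low_coded_eq0 th Horbit del al be Hsep Hal) as Hlow.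
  split; [exact Hlow|split; [exists del; split; assumption|]].
  intros s Hs. exact (F_up_coded_eq1 th Horbit al be s Hs). }
exists (fun z => exists al, z = code al). split; [|split; [split|]].
- intros [h Hh]. apply (no_injection_bool_seq_nat (fun al => h (code al))).
  intros al be E. apply Hcode, Hh; eauto.
- exists (code (fun _ => false)), (code (fun _ => true)). split; [eauto|split; [eauto|]].
  intros E. apply Hcode in E. discriminate (equal_f E 0%nat).
- intros z z' Hz Hz' Hne. apply Hpair; assumption.
- exists del. split; [exact Hdel|]. intros z z' Hz Hz' Hne. apply Hpair; assumption.
Qed.

End ProductMetric.

Lemma set_finite_countable {T : Type} (A : T -> Prop) : set_finite A -> set_countable A.
Proof.
intros [l Hl].
exists (fun x => epsilon (inhabits 0%nat) (fun i => nth_error l i = Some x)).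
intros a b Ha Hb E.
pose proof (epsilon_spec (inhabits 0%nat) (fun i => nth_error l i = Some a)
              (In_nth_error _ _ (Hl a Ha))) as Ea.
pose proof (epsilon_spec (inhabits 0%nat) (fun i => nth_error l i = Some b)
              (In_nth_error _ _ (Hl b Hb))) as Eb.
simpl in Ea, Eb. rewrite E in Ea. congruence.
Qed.

Lemma set_uncountable_infinite {T : Type} (A : T -> Prop) : set_uncountable A -> set_infinite A.
Proof. intros H Hfin. exact (H (set_finite_countable A Hfin)). Qed.

Lemma DC_pair1_pair2 {Y : Type} (d : Y -> Y -> R) f x y : DC_pair1 d f x y -> DC_pair2 d f x y.
Proof. intros [[s [Hs E]] Hup]. split; [|exact Hup]. exists s. rewrite E. simpl. lra. Qed.

Lemma DC_scrambled1_scrambled2 {Y : Type} (d : Y -> Y -> R) f A :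
  DC_scrambled1 d f A -> DC_scrambled2 d f A.
Proof. intros [Htwo Hpairs]. split; [exact Htwo|]. intros. apply DC_pair1_pair2; auto. Qed.

Theorem theorem3p5 (X G : Type)
  (HXfin : finite_type X) (HX2 : exists a b : X, a <> b)
  (HGcount : countable_type G) (HGne : inhabited G)
  (phi : G -> G) (d : (G -> X) -> (G -> X) -> R)
  (Hd : is_metric d) (Hdc : compatible_product_metric d) :
  let f := gen_shift phi in
  (has_non_quasi_periodic phi <-> uniform_DC d f) /\
  (has_non_quasi_periodic phi <-> DCu1 d f) /\
  (has_non_quasi_periodic phi <-> DCinf1 d f) /\
  (has_non_quasi_periodic phi <-> DC21 d f) /\
  (has_non_quasi_periodic phi <-> DCu2 d f) /\
  (has_non_quasi_periodic phi <-> DCinf2 d f) /\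
  (has_non_quasi_periodic phi <-> DC22 d f).
Proof.
intros f.
destruct HXfin as [lx Hlx]. destruct HX2 as [a0 [b0 Hab]]. destruct HGcount as [enc Hinj].
assert (Hforward : has_non_quasi_periodic phi -> uniform_DC d f)
  by exact (uniform_DC_of_non_quasi_periodic a0 lx Hlx enc Hinj d Hd Hdc phi a0 b0 Hab).
assert (Hbackward : DC22 d f -> has_non_quasi_periodic phi).
{ intros [A [[x [y [Hx [Hy Hxy]]]] Hpairs]].
  exact (DC_pair2_shift_non_quasi_periodic a0 lx Hlx enc Hinj d Hd Hdc phi x y
           (Hpairs x y Hx Hy Hxy)). }
assert (U1 : uniform_DC d f -> DCu1 d f) by (intros [A [HA [HS _]]]; exists A; auto).
assert (U2 : DCu1 d f -> DCinf1 d f)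
  by (intros [A [HA HS]]; exists A; auto using set_uncountable_infinite).
assert (U3 : DCinf1 d f -> DC21 d f) by (intros [A [_ HS]]; exists A; exact HS).
assert (U4 : DC21 d f -> DC22 d f)
  by (intros [A HS]; exists A; exact (DC_scrambled1_scrambled2 d f A HS)).
assert (U5 : DCu1 d f -> DCu2 d f)
  by (intros [A [HA HS]]; exists A; auto using DC_scrambled1_scrambled2).
assert (U6 : DCu2 d f -> DCinf2 d f)
  by (intros [A [HA HS]]; exists A; auto using set_uncountable_infinite).
assert (U7 : DCinf2 d f -> DC22 d f) by (intros [A [_ HS]]; exists A; exact HS).
repeat split; tauto.
Qed.
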